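(* Let $X$ be a Banach space, $D\subset X$ closed, bounded and convex, and $\tau$ a locally convex topology on $D$ containing the relative weak topology of $D$. Let $C$ be a convex subset of $D$, $\varepsilon>0$, $n,k\in\mathbb{N}$, $\lambda\in S^+_{\ell_1^n}$, $\{x_1,\dots,x_k\}\subset X$, and let $(\widetilde O_i)_{i=1}^n$ be nonempty sets in $\tau|_C$. Then for each $1\le i\le n$ there is a nonempty $\tau|_{\widetilde O_i}$-open set $O_i$ such that $$\operatorname{diam}\Big(\sum_{i=1}^n\lambda(i)O_i\Big)\le SD(\lambda,(O_i))+\varepsilon$$ and $$d\Big(\{x_1,\dots,x_k\},\sum_{i=1}^n\lambda(i)O_i\Big)\ge \frac{SD(\lambda,(O_i))}{2}-\varepsilon.$$
   Context: $\tau|_C$ is the topology induced by $\tau$ on $C$; locally convex means having a basis of convex open sets. $S^+_{\ell_1^n}=\{\lambda\in\mathbb{R}^n:\lambda(i)\ge0,\ \sum_i\lambda(i)=1\}$. Sums of sets are Minkowski sums. For nonempty sets $O_1,\dots,O_n\in\tau|_C$ and $\lambda\in S^+_{\ell_1^n}$, the sub-diameter is $$SD(\lambda,(O_i))=\inf\Big\{\operatorname{diam}\Big(\sum_i\lambda(i)U_i\Big): U_i \text{ nonempty and } U_i\in\tau|_{O_i}\text{ for }1\le i\le n\Big\}.$$ $d(A,B)=\inf\{\|a-b\|:a\in A,b\in B\}$. *)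

From HB Require Import structures.
From mathcomp Require Import all_boot all_order all_algebra.
From mathcomp Require Import all_classical all_reals all_analysis.
Set Implicit Arguments. Unset Strict Implicit. Unset Printing Implicit Defensive.
Import Order.TTheory GRing.Theory Num.Theory.
Import numFieldNormedType.Exports.
Local Open Scope classical_set_scope.
Local Open Scope ring_scope.

Section Defs.
Context {R : realType} {X : normedModType R}.

Definition cvx_set (A : set X) : Prop :=
  forall x y (t : R), A x -> A y -> 0 <= t -> t <= 1 -> A (t *: x + (1 - t) *: y).

Definition is_topology_on (D : set X) (tau : set (set X)) : Prop :=
  [/\ (forall U, tau U -> U `<=` D),
      tau set0, tau D,
      (forall U V, tau U -> tau V -> tau (U `&` V)) &
      (forall (F : set (set X)), F `<=` tau -> tau (\bigcup_(U in F) U))].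

Definition locally_convex_top (tau : set (set X)) : Prop :=
  forall U x, tau U -> U x -> exists V, [/\ tau V, cvx_set V, V x & V `<=` U].

Definition weakly_open (W : set X) : Prop :=
  forall x, W x -> exists (m : nat) (f : 'I_m -> {linear X -> R^o}) (e : R),
    [/\ (forall j, continuous (f j)), 0 < e &
        [set y | forall j, `|f j (y - x)| < e] `<=` W].

Definition contains_rel_weak (D : set X) (tau : set (set X)) : Prop :=
  forall W, weakly_open W -> tau (D `&` W).

Definition rel_open (tau : set (set X)) (A : set X) (O : set X) : Prop :=
  exists U, tau U /\ O = A `&` U.

Definition diam (A : set X) : \bar R :=
  ereal_sup [set (`|a - b|)%:E | a in A & b in A].

Definition set_dist (A B : set X) : \bar R :=
  ereal_inf [set (`|a - b|)%:E | a in A & b in B].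

Definition mink_comb (n : nat) (lam : 'I_n -> R) (O : 'I_n -> set X) : set X :=
  [set z | exists y : 'I_n -> X, (forall i, O i (y i)) /\ z = \sum_(i < n) lam i *: y i].

Definition pos_simplex (n : nat) (lam : 'I_n -> R) : Prop :=
  (forall i, 0 <= lam i) /\ \sum_(i < n) lam i = 1.

Definition subdiam (tau : set (set X)) (n : nat) (lam : 'I_n -> R) (O : 'I_n -> set X) : \bar R :=
  ereal_inf [set diam (mink_comb lam U) | U in
    [set U : 'I_n -> set X | forall i, U i !=set0 /\ rel_open tau (O i) (U i)]].

End Defs.

(* Let s be the sub-diameter of the Ot_i.  Shrink the Ot_i to U_i whose
   combination has diameter at most s + eps/2: every further shrinking has
   sub-diameter between s and s + eps/2, so the first inequality persists.  Every
   shrinking also has diameter above s - eps/2, so its combination contains a point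
   a far from a given x_j.  A Hahn-Banach functional norming a - x_j varies little
   on weak neighbourhoods of the summands of a, and cutting the U_i down to these
   neighbourhoods keeps the whole combination away from x_j.  Doing this for each
   x_j in turn gives the second inequality. *)

From HB Require Import structures.
From mathcomp Require Import all_boot all_order all_algebra.
From mathcomp Require Import all_classical all_reals all_analysis.
From mathcomp Require Import ring lra.
Import Order.TTheory GRing.Theory Num.Theory.
Import numFieldNormedType.Exports.
Local Open Scope classical_set_scope.
Local Open Scope ring_scope.

Set Implicit Arguments. Unset Strict Implicit. Unset Printing Implicit Defensive.

Section HahnBanach.
Variables (R : realType) (X : lmodType R) (p : X -> R).
Hypothesis p_add : forall a b, p (a + b) <= p a + p b.
Hypothesis p_scale : forall t a, 0 < t -> p (t *: a) = t * p a.

Definition dominated_linear_graph (G : set (X * R)) : Prop :=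
  [/\ forall a r s, G (a, r) -> G (a, s) -> r = s,
      forall a b r s, G (a, r) -> G (b, s) -> G (a + b, r + s),
      forall t a r, G (a, r) -> G (t *: a, t * r) &
      forall a r, G (a, r) -> r <= p a].

Lemma dominated_linear_graph_bigcup (F : set (set (X * R))) :
  F `<=` dominated_linear_graph -> total_on F subset ->
  dominated_linear_graph (\bigcup_(G in F) G).
Proof.
move=> FP tot; split.
- move=> a r s [G1 F1 H1] [G2 F2 H2].
  have [S|S] := tot _ _ F1 F2.
  + by case: (FP _ F2) => fun_ _ _ _; apply: fun_ (S _ H1) H2.
  + by case: (FP _ F1) => fun_ _ _ _; apply: fun_ H1 (S _ H2).
- move=> a b r s [G1 F1 H1] [G2 F2 H2].
  have [S|S] := tot _ _ F1 F2.
  + by exists G2 => //; case: (FP _ F2) => _ add_ _ _; apply: add_ (S _ H1) H2.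
  + by exists G1 => //; case: (FP _ F1) => _ add_ _ _; apply: add_ H1 (S _ H2).
- move=> t a r [G1 F1 H1]; exists G1 => //.
  by case: (FP _ F1) => _ _ sc _; apply: sc.
- by move=> a r [G1 F1 H1]; case: (FP _ F1) => _ _ _ dom; apply: dom.
Qed.

Lemma dominated_linear_graph00 G :
  dominated_linear_graph G -> G !=set0 -> G (0, 0).
Proof.
by case=> _ _ sc _ [[a r] /(sc 0)]; rewrite scale0r mul0r.
Qed.

(* The value at [w] of any extension must lie in this gap, which is nonempty
   because [p] is subadditive. *)
Lemma dominated_linear_graph_gap G w :
  dominated_linear_graph G -> G (0, 0) ->
  exists c, (forall a g, G (a, g) -> g - p (a - w) <= c) /\
            (forall b h, G (b, h) -> c <= p (b + w) - h).
Proof.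
case=> _ add_ _ dom G00.
pose S := [set y | exists a g, G (a, g) /\ y = g - p (a - w)].
have gap a g b h : G (a, g) -> G (b, h) -> g - p (a - w) <= p (b + w) - h.
  move=> Ha Hb; have := dom _ _ (add_ _ _ _ _ Ha Hb).
  have := p_add (a - w) (b + w); rewrite addrACA addNr addr0; lra.
have S0 : S !=set0 by exists (0 - p (0 - w)), 0, 0.
have S_ub : ubound S (p (0 + w) - 0) by move=> y [a [g [Ha ->]]]; apply: gap Ha G00.
exists (sup S); split.
- move=> a g Ha; apply: ub_le_sup; first by exists (p (0 + w) - 0).
  by exists a, g.
- by move=> b h Hb; apply: ge_sup => // y [a [g [Ha ->]]]; apply: gap Ha Hb.
Qed.

Definition graph_extension (G : set (X * R)) (w : X) (c : R) : set (X * R) :=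
  [set q | exists a g t, G (a, g) /\ q = (a + t *: w, g + t * c)].

Section Extension.
Variables (G : set (X * R)) (w : X) (c : R).
Hypothesis G_dom : dominated_linear_graph G.
Hypothesis w_undef : ~ (exists r, G (w, r)).
Hypothesis c_lb : forall a g, G (a, g) -> g - p (a - w) <= c.
Hypothesis c_ub : forall b h, G (b, h) -> c <= p (b + w) - h.

Lemma graph_extension_functional a r s :
  graph_extension G w c (a, r) -> graph_extension G w c (a, s) -> r = s.
Proof.
case: G_dom => fun_ add_ sc _.
move=> [a1 [g1 [t1 [H1 [Ea1 ->]]]]] [a2 [g2 [t2 [H2 [Ea2 ->]]]]].
have [e12|t12] := eqVneq t1 t2.
  subst t2; have {}e12 : a1 = a2 by apply: (addIr (t1 *: w)); rewrite -Ea1 -Ea2.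
  by rewrite e12 in H1; rewrite (fun_ _ _ _ H1 H2).
have Hd : G (a1 - a2, g1 - g2).
  by apply: add_ H1 _; have := sc (-1) _ _ H2; rewrite scaleN1r mulN1r.
have e : a1 - a2 = (t2 - t1) *: w.
  rewrite scalerBl -[a1](addrK (t1 *: w)) -Ea1 Ea2.
  by rewrite addrAC [a2 + _]addrC addrK.
case: w_undef; exists ((t2 - t1)^-1 * (g1 - g2)).
have := sc ((t2 - t1)^-1) _ _ Hd.
by rewrite e scalerA mulVf ?scale1r // subr_eq0 eq_sym.
Qed.

(* Scaling by [1 / |t|] reduces the bound at [a + t w] to the choice of [c]. *)
Lemma graph_extension_le a r : graph_extension G w c (a, r) -> r <= p a.
Proof.
case: G_dom => _ _ sc dom.
move=> [a1 [g1 [t [H1 [-> ->]]]]].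
have [tn|tp|->] := ltgtP t 0; last by rewrite scale0r addr0 mul0r addr0; apply: dom.
- have sp : 0 < - t by rewrite oppr_gt0.
  have := c_lb (sc (- t)^-1 _ _ H1).
  have -> : (- t)^-1 *: a1 - w = (- t)^-1 *: (a1 + t *: w).
    by rewrite scalerDr scalerA invrN mulNr mulVf ?scaleN1r ?ltr0_neq0.
  rewrite p_scale ?invr_gt0 // => /(ler_wpM2l (ltW sp)).
  by rewrite mulrBr !mulrA mulfV ?gt_eqF // !mul1r; lra.
- have := c_ub (sc t^-1 _ _ H1).
  have -> : t^-1 *: a1 + w = t^-1 *: (a1 + t *: w).
    by rewrite scalerDr scalerA mulVf ?scale1r // gt_eqF.
  rewrite p_scale ?invr_gt0 // => /(ler_wpM2l (ltW tp)).
  by rewrite mulrBr !mulrA mulfV ?gt_eqF // !mul1r; lra.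
Qed.

Lemma dominated_graph_extension :
  dominated_linear_graph (graph_extension G w c).
Proof.
case: G_dom => _ add_ sc _; split.
- exact: graph_extension_functional.
- move=> a b r s [a1 [g1 [t1 [H1 [-> ->]]]]] [a2 [g2 [t2 [H2 [-> ->]]]]].
  exists (a1 + a2), (g1 + g2), (t1 + t2); split; first exact: add_.
  by congr pair; [rewrite scalerDl addrACA | ring].
- move=> t a r [a1 [g1 [t1 [H1 [-> ->]]]]].
  exists (t *: a1), (t * g1), (t * t1); split; first exact: sc.
  by congr pair; [rewrite scalerDr scalerA | ring].
- exact: graph_extension_le.
Qed.

Lemma graph_extension_sub : G `<=` graph_extension G w c.
Proof.
by move=> [a g] Hag; exists a, g, 0; rewrite scale0r mul0r !addr0.
Qed.

Lemma graph_extension_at : G (0, 0) -> graph_extension G w c (w, c).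
Proof. by exists 0, 0, 1; rewrite scale1r mul1r !add0r. Qed.

End Extension.

Theorem hahn_banach (G0 : set (X * R)) :
  dominated_linear_graph G0 -> G0 !=set0 ->
  exists f : {linear X -> R^o},
    (forall a, f a <= p a) /\ (forall a r, G0 (a, r) -> f a = r).
Proof.
move=> G0_dom G0_ne.
(* Zorn's lemma also sees the empty chain, hence the premise [G !=set0]. *)
pose P G := dominated_linear_graph G /\ (G !=set0 -> G0 `<=` G).
have [A [[A_dom A_G0] A_max]] : exists A, P A /\ forall B, A `<` B -> ~ P B.
  apply: Zorn_bigcup => F FP tot; split.
    by apply: dominated_linear_graph_bigcup => // G /FP[].
  move=> [q [G FG Gq]] z /((FP G FG).2 (ex_intro _ q Gq)) Gz.
  by exists G.
have A_ne : A !=set0.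
  apply: contrapT => A_empty.
  have A0 : A = set0 by apply/seteqP; split=> // q Aq; apply: A_empty; exists q.
  apply: (A_max G0); last by split=> // _ q.
  by rewrite A0; split=> // /(_ _ (projT2 (cid G0_ne))).
have A00 := dominated_linear_graph00 A_dom A_ne.
have A_total w : exists r, A (w, r).
  apply: contrapT => w_undef.
  have [c [c_lb c_ub]] := dominated_linear_graph_gap w A_dom A00.
  apply: (A_max (graph_extension A w c)).
    split; first exact: graph_extension_sub.
    by move=> /(_ _ (graph_extension_at w c A00)) Awc; apply: w_undef; exists c.
  split; first exact: dominated_graph_extension.
  by move=> _ q /(A_G0 A_ne); apply: graph_extension_sub.
have /choice [f Af] := A_total.
case: A_dom => fun_ add_ sc dom.
have f_lin : linear (f : X -> R^o).
  by move=> t a b; apply: fun_ (Af _) (add_ _ _ _ _ (sc t _ _ (Af a)) (Af b)).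
exists (HB.pack_for {linear X -> R^o} f (GRing.isLinear.Build R X R^o *:%R f f_lin)).
split=> [a | a r G0ar]; first exact: dom (Af a).
exact: fun_ (Af a) (A_G0 A_ne _ G0ar).
Qed.

End HahnBanach.

Section NormedSpace.
Variables (R : realType) (X : normedModType R).

Lemma norming_functional (v : X) : exists f : {linear X -> R^o},
  [/\ continuous f, forall y, `|f y| <= `|y| & f v = `|v|].
Proof.
pose L := [set q : X * R | exists t, q = (t *: v, t * `|v|)].
have norm_scale t (a : X) : 0 < t -> `|t *: a| = t * `|a|.
  by move=> t0; rewrite normrZ gtr0_norm.
have L_dom : dominated_linear_graph (fun a : X => `|a|) L.
  split.
  - move=> a r s [t1 [-> ->]] [t2 [e ->]].
    have [->|v0] := eqVneq v 0; first by rewrite normr0 !mulr0.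
    by move/eqP: e; rewrite -subr_eq0 -scalerBl scaler_eq0 (negbTE v0) orbF subr_eq0 => /eqP ->.
  - move=> a b r s [t1 [-> ->]] [t2 [-> ->]].
    by exists (t1 + t2); rewrite scalerDl mulrDl.
  - move=> t a r [t1 [-> ->]].
    by exists (t * t1); rewrite scalerA mulrA.
  - move=> a r [t [-> ->]].
    by rewrite normrZ ler_wpM2r // ler_norm.
have L_v : L (v, `|v|) by exists 1; rewrite scale1r mul1r.
have [f [f_le f_L]] := hahn_banach (@ler_normD _ X) norm_scale L_dom (ex_intro _ _ L_v).
have f_norm y : `|f y| <= `|y|.
  by rewrite ler_norml f_le andbT lerNl -linearN -(normrN y) f_le.
exists f; split=> //; last exact: f_L L_v.
apply: bounded_linear_continuous; apply/linear_boundedP.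
by near=> r => y; rewrite (le_trans (f_norm y)) // ler_peMl.
Unshelve. all: by end_near.
Qed.

Lemma weakly_open_slab (f : {linear X -> R^o}) (y : X) (e : R) :
  continuous f -> weakly_open [set w | `|f (w - y)| < e].
Proof.
move=> f_cont w0 /= fw0.
exists 1%N, (fun=> f), (e - `|f (w0 - y)|); split=> //; first by rewrite subr_gt0.
move=> w /= /(_ ord0) fww0.
have -> : w - y = (w - w0) + (w0 - y) by rewrite addrA subrK.
by rewrite linearD (le_lt_trans (ler_normD _ _)) // -ltrBrDr.
Qed.

Section Minkowski.
Variables (n : nat) (lam : 'I_n -> R).

Lemma mink_combS (U V : 'I_n -> set X) :
  (forall i, V i `<=` U i) -> mink_comb lam V `<=` mink_comb lam U.
Proof. by move=> VU z [y [Vy ->]]; exists y; split=> // i; apply: VU. Qed.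

Lemma mink_comb_nonempty (U : 'I_n -> set X) :
  (forall i, U i !=set0) -> mink_comb lam U !=set0.
Proof.
move=> U_ne; have /choice [y Uy] : forall i, exists y, U i y.
  by move=> i; case: (U_ne i) => y; exists y.
by exists (\sum_i lam i *: y i); exists y.
Qed.

Lemma pos_simplex_sum_ge (u : 'I_n -> R) (m : R) :
  pos_simplex lam -> (forall i, m <= u i) -> m <= \sum_i lam i * u i.
Proof.
case=> lam_ge0 lam_sum1 mu.
rewrite -[m]mul1r -lam_sum1 mulr_suml; apply: ler_sum => i _.
exact: ler_wpM2l.
Qed.

Lemma mink_comb_norm_le (U : 'I_n -> set X) (M : R) :
  pos_simplex lam -> (forall i y, U i y -> `|y| <= M) ->
  forall z, mink_comb lam U z -> `|z| <= M.
Proof.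
move=> [lam_ge0 lam_sum1] UM z [y [Uy ->]].
apply: le_trans (ler_norm_sum _ _ _) _.
rewrite -[M]mul1r -lam_sum1 mulr_suml; apply: ler_sum => i _.
by rewrite normrZ ger0_norm // ler_wpM2l // (UM i).
Qed.

End Minkowski.

Lemma diam_ge0 (A : set X) : A !=set0 -> (0 <= diam A)%E.
Proof.
move=> [a Aa]; apply: le_trans (ereal_sup_ubound _); last by exists a => //; exists a.
by rewrite subrr normr0.
Qed.

Lemma diam_le_norm (A : set X) (M : R) :
  (forall z, A z -> `|z| <= M) -> (diam A <= (2 * M)%:E)%E.
Proof.
move=> AM; apply: ge_ereal_sup => _ [a Aa [b Ab <-]]; rewrite lee_fin.
by apply: le_trans (ler_normB a b) _; rewrite mulr2n mulrDl mul1r lerD ?AM.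
Qed.

Lemma diamS (A B : set X) : A `<=` B -> (diam A <= diam B)%E.
Proof.
move=> AB; apply: ereal_sup_le => _ [a Aa [b Ab <-]].
by exists a; [apply: AB | exists b; [apply: AB |]].
Qed.

Lemma diam_far_point (A : set X) (x0 : X) (r : R) :
  (r%:E < diam A)%E -> exists2 a, A a & r / 2 < `|a - x0|.
Proof.
move=> r_lt; apply: contrapT => A_near; move: r_lt; apply/negP; rewrite -leNgt.
have near a : A a -> `|a - x0| <= r / 2.
  by move=> Aa; rewrite leNgt; apply/negP => far; apply: A_near; exists a.
apply: ge_ereal_sup => _ [a Aa [b Ab <-]]; rewrite lee_fin.
apply: le_trans (ler_distD x0 a b) _; rewrite [`|x0 - b|]distrC.
by rewrite [r]splitr lerD ?near.
Qed.

End NormedSpace.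

Section SubDiameter.
Variables (R : realType) (X : normedModType R) (D : set X) (tau : set (set X)).
Variables (n : nat) (lam : 'I_n -> R).
Hypothesis tau_top : is_topology_on D tau.
Hypothesis tau_weak : contains_rel_weak D tau.
Hypothesis lam_simplex : pos_simplex lam.

Lemma rel_open_subset (A O : set X) : rel_open tau A O -> O `<=` A.
Proof. by move=> [U [_ ->]] z []. Qed.

Lemma rel_open_trans (A O O' : set X) :
  rel_open tau A O -> rel_open tau O O' -> rel_open tau A O'.
Proof.
move=> [U [tU ->]] [V [tV ->]]; exists (U `&` V); split; last by rewrite setIA.
by case: tau_top => _ _ _ tauI _; apply: tauI.
Qed.

Lemma rel_open_refl (O : set X) : O `<=` D -> rel_open tau O O.
Proof. by move=> OD; exists D; split; [case: tau_top | rewrite setIidl]. Qed.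

Definition refinement (B U : 'I_n -> set X) : Prop :=
  forall i, U i !=set0 /\ rel_open tau (B i) (U i).

Lemma refinement_subset (B U : 'I_n -> set X) :
  refinement B U -> forall i, U i `<=` B i.
Proof. by move=> BU i; apply: rel_open_subset (BU i).2. Qed.

Lemma refinement_subset_trans (A : set X) (B U : 'I_n -> set X) :
  (forall i, B i `<=` A) -> refinement B U -> forall i, U i `<=` A.
Proof. by move=> BA BU i; apply: subset_trans (BA i); apply: refinement_subset BU i. Qed.

Lemma refinement_trans (B U V : 'I_n -> set X) :
  refinement B U -> refinement U V -> refinement B V.
Proof. by move=> BU UV i; split; [case: (UV i) | apply: rel_open_trans (BU i).2 (UV i).2]. Qed.

Lemma refinement_refl (U : 'I_n -> set X) :
  (forall i, U i !=set0) -> (forall i, U i `<=` D) -> refinement U U.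
Proof. by move=> U_ne UD i; split; [apply: U_ne | apply: rel_open_refl]. Qed.

Lemma subdiam_le_diam (B U : 'I_n -> set X) :
  refinement B U -> (subdiam tau lam B <= diam (mink_comb lam U))%E.
Proof. by move=> BU; apply: ereal_inf_lbound; exists U. Qed.

Lemma subdiam_refinement (B U : 'I_n -> set X) :
  refinement B U -> (subdiam tau lam B <= subdiam tau lam U)%E.
Proof.
move=> BU; apply: ereal_inf_le_tmp => _ [V UV <-].
by exists V => //; apply: refinement_trans BU UV.
Qed.

Lemma subdiam_ge0 (B : 'I_n -> set X) : (0 <= subdiam tau lam B)%E.
Proof.
apply: le_ereal_inf_tmp => _ [U BU <-].
by apply/diam_ge0/mink_comb_nonempty => i; case: (BU i).
Qed.

Lemma subdiam_approx (B : 'I_n -> set X) (s e : R) :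
  subdiam tau lam B = s%:E -> 0 < e ->
  exists U, refinement B U /\ (diam (mink_comb lam U) <= (s + e)%:E)%E.
Proof.
move=> B_s e0; have : (subdiam tau lam B < (s + e)%:E)%E by rewrite B_s lte_fin ltrDl.
by case/ereal_inf_lt => _ [U BU <-] /ltW; exists U.
Qed.

(* A functional norming [a - x0] at a point [a = sum_i lam i y_i] far from [x0]
   varies by less than [e] on the weak neighbourhoods [V i] of the [y i], so it
   keeps the whole combination [sum_i lam i V_i] away from [x0]. *)
Lemma far_refinement (U : 'I_n -> set X) (x0 : X) (r e : R) :
  0 < e -> (forall i, U i `<=` D) -> (r%:E < diam (mink_comb lam U))%E ->
  exists V, refinement U V /\
    forall z, mink_comb lam V z -> r / 2 - e <= `|x0 - z|.
Proof.
move=> e0 UD r_lt.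
have [_ [y [Uy ->]] far] := diam_far_point x0 r_lt.
have [f [f_cont f_norm f_y]] := norming_functional (\sum_i lam i *: y i - x0).
pose W i := [set w | `|f (w - y i)| < e].
exists (fun i => U i `&` (D `&` W i)); split.
  move=> i; split.
    by exists (y i); split; [| split; [apply: UD | rewrite /W /= subrr linear0 normr0]].
  by exists (D `&` W i); split=> //; apply/tau_weak/weakly_open_slab.
move=> _ [z [Vz ->]].
have shift : \sum_i lam i *: z i - x0 =
             \sum_i lam i *: (z i - y i) + (\sum_i lam i *: y i - x0).
  rewrite addrA -big_split /=; congr (_ - _); apply: eq_bigr => i _.
  by rewrite -scalerDr subrK.
have sum_ge : - e <= \sum_i lam i * f (z i - y i).
  apply: pos_simplex_sum_ge => // i; have [_ [_ /ltW]] := Vz i.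
  by rewrite ler_norml => /andP[].
rewrite distrC (le_trans _ (le_trans (ler_norm _) (f_norm _))) // shift.
rewrite linearD linear_sum f_y /=.
under eq_bigr do rewrite linearZ.
by rewrite -[_ - e]addrC lerD // ltW.
Qed.

Lemma far_refinement_seq (U : 'I_n -> set X) (s : seq X) (r e : R) :
  0 < e -> (forall i, U i !=set0) -> (forall i, U i `<=` D) ->
  (forall V, refinement U V -> (r%:E < diam (mink_comb lam V))%E) ->
  exists V, refinement U V /\
    forall x0 z, x0 \in s -> mink_comb lam V z -> r / 2 - e <= `|x0 - z|.
Proof.
move=> e0 U_ne UD U_wide; elim: s => [|x0 s [V [UV V_far]]].
  by exists U; split; [apply: refinement_refl|].
have [W [VW W_far]] := far_refinement x0 e0 (refinement_subset_trans UD UV) (U_wide V UV).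
exists W; split; first exact: refinement_trans UV VW.
move=> x1 z; rewrite inE => /orP[/eqP -> | x1s] Wz; first exact: W_far.
exact/(V_far _ _ x1s)/(mink_combS (refinement_subset VW)).
Qed.

Lemma subdiam_fin_num (B : 'I_n -> set X) (M : R) :
  (forall i, B i !=set0) -> (forall i, B i `<=` D) ->
  (forall i y, B i y -> `|y| <= M) -> subdiam tau lam B \is a fin_num.
Proof.
move=> B_ne BD BM; rewrite ge0_fin_numE ?subdiam_ge0 //.
apply: le_lt_trans (subdiam_le_diam (refinement_refl B_ne BD)) _.
apply: le_lt_trans (diam_le_norm (mink_comb_norm_le lam_simplex BM)) _.
exact: ltry.
Qed.

Lemma subdiam_refinement_bounds (B V : 'I_n -> set X) (s e : R) :
  (forall i, B i `<=` D) -> subdiam tau lam B = s%:E -> refinement B V ->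
  (diam (mink_comb lam V) <= (s + e)%:E)%E ->
  exists2 t, subdiam tau lam V = t%:E & s <= t <= s + e.
Proof.
move=> BD B_s BV V_diam.
have V_ge : (s%:E <= subdiam tau lam V)%E by rewrite -B_s; apply: subdiam_refinement BV.
have V_le : (subdiam tau lam V <= (s + e)%:E)%E.
  apply: le_trans V_diam; apply/subdiam_le_diam/refinement_refl.
    by move=> i; case: (BV i).
  exact: refinement_subset_trans BD BV.
have V_fin : subdiam tau lam V \is a fin_num.
  by rewrite fin_numElt (lt_le_trans _ V_ge) ?ltNyr // (le_lt_trans V_le) ?ltry.
by exists (fine (subdiam tau lam V)); rewrite ?fineK // -!lee_fin fineK // V_ge V_le.
Qed.

End SubDiameter.

Unset Implicit Arguments. Set Strict Implicit.

Theorem lemma2p4 (R : realType) (X : completeNormedModType R)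
  (D : set X) (tau : set (set X)) (C : set X) (eps : R) (n k : nat)
  (lam : 'I_n -> R) (x : 'I_k -> X) (Ot : 'I_n -> set X) :
  closed D -> bounded_set D -> cvx_set D ->
  is_topology_on D tau -> locally_convex_top tau -> contains_rel_weak D tau ->
  cvx_set C -> C `<=` D -> 0 < eps -> pos_simplex lam ->
  (forall i, Ot i !=set0 /\ rel_open tau C (Ot i)) ->
  exists O : 'I_n -> set X,
    [/\ (forall i, O i !=set0 /\ rel_open tau (Ot i) (O i)),
        (diam (mink_comb lam O) <= subdiam tau lam O + eps%:E)%E &
        (set_dist (range x) (mink_comb lam O) >= subdiam tau lam O * (2^-1)%:E - eps%:E)%E].
Proof.
move=> _ D_bd _ tau_top _ tau_weak _ CD eps0 lam_simplex Ot_open.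
have [M _ DM] := ex_strict_bound_gt0 D_bd.
have OtD i : Ot i `<=` D.
  by apply: subset_trans CD; apply: rel_open_subset (Ot_open i).2.
have Ot_fin : subdiam tau lam Ot \is a fin_num.
  apply: (subdiam_fin_num tau_top lam_simplex (M := M)) => // [i|i y /OtD /DM /ltW //].
  by case: (Ot_open i).
set s := fine (subdiam tau lam Ot); have Ot_s : subdiam tau lam Ot = s%:E by rewrite fineK.
have eps2 : 0 < eps / 2 by rewrite divr_gt0.
have [U0 [OtU0 U0_diam]] := subdiam_approx Ot_s eps2.
have U0_wide V : refinement tau U0 V -> ((s - eps / 2)%:E < diam (mink_comb lam V))%E.
  move=> U0V; apply: lt_le_trans (subdiam_le_diam lam (refinement_trans tau_top OtU0 U0V)).
  by rewrite Ot_s lte_fin ltrBlDr ltrDl.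
have [V [U0V V_far]] := far_refinement_seq tau_top tau_weak lam_simplex (codom x) eps2
  (fun i => (OtU0 i).1) (refinement_subset_trans OtD OtU0) U0_wide.
have OtV := refinement_trans tau_top OtU0 U0V.
have V_diam : (diam (mink_comb lam V) <= (s + eps / 2)%:E)%E.
  by apply: le_trans U0_diam; apply: diamS; apply: mink_combS; apply: refinement_subset U0V.
have [t V_t /andP[s_le_t t_le]] := subdiam_refinement_bounds tau_top OtD Ot_s OtV V_diam.
exists V; rewrite V_t; split=> //.
  by rewrite -EFinD (le_trans V_diam) // lee_fin; lra.
rewrite -EFinM -EFinB; apply: le_ereal_inf_tmp => _ [_ [j _ <-] [z Vz <-]].
rewrite lee_fin (le_trans _ (V_far _ _ (codom_f x j) Vz)) //; lra.
Qed.
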